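(* Consider the fractionation problem with $N\ge 1$ fractions: minimize $Y_{N-1}^+$ over doses $d_0,\dots,d_{N-1}\ge 0$ subject to $\sum_{k=0}^{N-1}\mathrm{BED}_O(d_k)\le c$. Assume that $\phi(x)>0$ for all $x>0$. Then every optimal dose sequence satisfies the constraint with equality, i.e. $\sum_{k=0}^{N-1}\mathrm{BED}_O(d_k^* )=c$.
   Context: Model: Tumor parameters $\alpha_T>0$, $\beta_T>0$, $[\alpha/\beta]_T=\alpha_T/\beta_T$; organ-at-risk (OAR) parameter $[\alpha/\beta]_O>0$; sparing factor $0<\gamma<1$; OAR limit $c>0$. Define $\mathrm{BED}_T(d)=d\left(1+\frac{d}{[\alpha/\beta]_T}\right)$ and $\mathrm{BED}_O(d)=\gamma d\left(1+\frac{\gamma d}{[\alpha/\beta]_O}\right)$ for $d\ge0$. Tumor growth between doses follows $\frac{1}{x}\frac{dx}{dt}=\phi(x)$, where $\phi:(0,\infty)\to\mathbb{R}$ is continuous and non-increasing (standing assumption). Doses $d_0,\dots,d_{N-1}$ are delivered at times $0,1,\dots,N-1$ (days). Writing $Y=\ln(\text{number of tumor cells})/\alpha_T$, let $F$ be the map sending the value of $Y$ at time $t$ to its value at time $t+1$ under the growth ODE (no dose). With initial cell number $X_0>0$ and $Y_0^-=\ln(X_0)/\alpha_T$, the state evolves by $Y_0^+=Y_0^- -\mathrm{BED}_T(d_0)$, $Y_{i+1}^-=F(Y_i^+)$, $Y_{i+1}^+=Y_{i+1}^- - \mathrm{BED}_T(d_{i+1})$ for $i=0,\dots,N-2$. 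*)

From Stdlib Require Import Reals Lra.
Open Scope R_scope.

Definition BED_T (alphaT betaT d : R) : R := d * (1 + d / (alphaT / betaT)).

Definition BED_O (abO gamma d : R) : R := gamma * d * (1 + gamma * d / abO).

Fixpoint sum_upto (f : nat -> R) (n : nat) : R :=
  match n with
  | O => 0
  | S m => sum_upto f m + f m
  end.

Definition total_BED_O (abO gamma : R) (N : nat) (d : nat -> R) : R :=
  sum_upto (fun k => BED_O abO gamma (d k)) N.

(* Y_i^+ : state just after the i-th dose.
   Y_0^+ = Y0 - BED_T(d_0);  Y_{i+1}^+ = F (Y_i^+) - BED_T(d_{i+1}). *)
Fixpoint Yplus (alphaT betaT : R) (F : R -> R) (Y0 : R) (d : nat -> R) (i : nat) : R :=
  match i with
  | O => Y0 - BED_T alphaT betaT (d O)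
  | S j => F (Yplus alphaT betaT F Y0 d j) - BED_T alphaT betaT (d (S j))
  end.

(* Standing assumption on the growth rate phi : (0,oo) -> R (modelled as a
   function on R of which only the values on (0,oo) matter):
   continuous on (0,oo) and non-increasing on (0,oo). *)
Definition phi_continuous_pos (phi : R -> R) : Prop :=
  forall x, 0 < x -> forall eps, 0 < eps -> exists delta, 0 < delta /\
    forall y, 0 < y -> Rabs (y - x) < delta -> Rabs (phi y - phi x) < eps.

Definition phi_nonincreasing_pos (phi : R -> R) : Prop :=
  forall x y, 0 < x -> x <= y -> phi y <= phi x.

(* F is the one-day flow map of (1/x) dx/dt = phi(x) in the variable
   Y = ln(x)/alphaT: for every Y, F Y = ln(x(1))/alphaT where x is a positive
   solution on [0,1] of x' = x phi(x) with x(0) = exp(alphaT Y)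
   (continuous on [0,1], differentiable on (0,1)). *)
Definition is_flow_map (alphaT : R) (phi : R -> R) (F : R -> R) : Prop :=
  forall Y, exists x : R -> R,
    x 0 = exp (alphaT * Y) /\
    (forall t, 0 <= t <= 1 -> 0 < x t) /\
    (forall t, 0 <= t <= 1 -> continuity_pt x t) /\
    (forall t, 0 < t < 1 -> derivable_pt_lim x t (x t * phi (x t))) /\
    F Y = ln (x 1) / alphaT.

(* Feasible dose sequence d_0..d_{N-1} (values of d at indices >= N are irrelevant). *)
Definition feasible (abO gamma c : R) (N : nat) (d : nat -> R) : Prop :=
  (forall k, (k < N)%nat -> 0 <= d k) /\ total_BED_O abO gamma N d <= c.

Definition objective (alphaT betaT X0 : R) (F : R -> R) (N : nat) (d : nat -> R) : R :=
  Yplus alphaT betaT F (ln X0 / alphaT) d (N - 1).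

Definition optimal (alphaT betaT abO gamma c X0 : R) (F : R -> R) (N : nat)
    (d : nat -> R) : Prop :=
  feasible abO gamma c N d /\
  forall d', feasible abO gamma c N d' ->
    objective alphaT betaT X0 F N d <= objective alphaT betaT X0 F N d'.

(* Only the last dose matters: the objective is Y_{N-1}^+ = F(Y_{N-2}^+) - BED_T(d_{N-1}),
   and the last dose enters nowhere else.  If an optimal schedule left slack
   in the OAR constraint, raising d_{N-1} by a small e > 0 would keep it
   feasible (BED_O is continuous) and strictly lower the objective (BED_T is
   strictly increasing on [0, oo)).  No property of phi or F is needed. *)
From Stdlib Require Import Reals Lra Lia Arith.
Open Scope R_scope.

Lemma sum_upto_ext (f g : nat -> R) (n : nat) :
  (forall k, (k < n)%nat -> f k = g k) -> sum_upto f n = sum_upto g n.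
Proof.
  induction n as [|n IH]; intros Hfg; simpl; [reflexivity|].
  rewrite IH by (intros; apply Hfg; lia).
  rewrite Hfg by lia. reflexivity.
Qed.

Lemma Yplus_ext aT bT F Y0 (d d' : nat -> R) (j : nat) :
  (forall k, (k <= j)%nat -> d' k = d k) ->
  Yplus aT bT F Y0 d' j = Yplus aT bT F Y0 d j.
Proof.
  induction j as [|j IH]; intros Hdd; simpl.
  - rewrite Hdd by lia. reflexivity.
  - rewrite IH by (intros; apply Hdd; lia).
    rewrite Hdd by lia. reflexivity.
Qed.

Lemma Yplus_last aT bT F Y0 (d d' : nat -> R) (m : nat) :
  (forall k, (k < m)%nat -> d' k = d k) ->
  Yplus aT bT F Y0 d' m =
  Yplus aT bT F Y0 d m - BED_T aT bT (d' m) + BED_T aT bT (d m).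
Proof.
  destruct m as [|m]; intros Hdd; simpl.
  - ring.
  - rewrite (Yplus_ext aT bT F Y0 d d' m) by (intros; apply Hdd; lia). ring.
Qed.

Lemma BED_T_increasing (alphaT betaT x y : R) :
  0 < alphaT -> 0 < betaT -> 0 <= x -> x < y ->
  BED_T alphaT betaT x < BED_T alphaT betaT y.
Proof.
  intros HaT HbT Hx Hxy. unfold BED_T.
  assert (Hr : 0 < alphaT / betaT) by (apply Rdiv_lt_0_compat; lra).
  assert (Hdiff : y * (1 + y / (alphaT / betaT)) - x * (1 + x / (alphaT / betaT))
                  = (y - x) * (1 + (x + y) / (alphaT / betaT))) by (field; lra).
  assert (0 < (x + y) / (alphaT / betaT)) by (apply Rdiv_lt_0_compat; lra).
  nra.
Qed.

(* Explicitly, BED_O(x + e) - BED_O(x) = e (gamma + gamma^2 (2x + e) / abO) <= e K for e <= 1. *)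
Lemma BED_O_right_continuous (abO gamma x s : R) :
  0 < abO -> 0 < gamma -> 0 <= x -> 0 < s ->
  exists e, 0 < e /\ BED_O abO gamma (x + e) < BED_O abO gamma x + s.
Proof.
  intros HabO Hg Hx Hs.
  set (K := gamma + gamma * gamma * (2 * x + 1) / abO).
  assert (HK : 0 < K).
  { assert (0 <= gamma * gamma * (2 * x + 1) / abO)
      by (apply Rmult_le_pos; [nra | left; apply Rinv_0_lt_compat; lra]).
    unfold K; lra. }
  set (e := Rmin 1 (s / (2 * K))).
  assert (He0 : 0 < e)
    by (apply Rmin_pos; [lra | apply Rdiv_lt_0_compat; lra]).
  assert (He1 : e <= 1) by apply Rmin_l.
  assert (HeK : e * K < s).
  { assert (e <= s / (2 * K)) by apply Rmin_r.
    assert (s / (2 * K) * K = s / 2) by (field; lra).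
    nra. }
  exists e; split; [exact He0|]. unfold BED_O.
  assert (Hdiff : gamma * (x + e) * (1 + gamma * (x + e) / abO)
                  - gamma * x * (1 + gamma * x / abO)
                  = e * (gamma + gamma * gamma * (2 * x + e) / abO)) by (field; lra).
  assert (gamma * gamma * (2 * x + e) / abO <= gamma * gamma * (2 * x + 1) / abO).
  { apply Rmult_le_compat_r; [left; apply Rinv_0_lt_compat; lra|].
    apply Rmult_le_compat_l; nra. }
  assert (e * (gamma + gamma * gamma * (2 * x + e) / abO) <= e * K)
    by (unfold K; apply Rmult_le_compat_l; lra).
  lra.
Qed.

Definition raise_dose (d : nat -> R) (m : nat) (e : R) : nat -> R :=
  fun k => if Nat.eqb k m then d k + e else d k.

Lemma raise_dose_at (d : nat -> R) (m : nat) (e : R) : raise_dose d m e m = d m + e.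
Proof. unfold raise_dose. rewrite Nat.eqb_refl. reflexivity. Qed.

Lemma raise_dose_other (d : nat -> R) (m k : nat) (e : R) :
  k <> m -> raise_dose d m e k = d k.
Proof. intros Hkm. unfold raise_dose. apply Nat.eqb_neq in Hkm. rewrite Hkm. reflexivity. Qed.

Lemma total_BED_O_raise_last (abO gamma e : R) (d : nat -> R) (m : nat) :
  total_BED_O abO gamma (S m) (raise_dose d m e) =
  total_BED_O abO gamma (S m) d - BED_O abO gamma (d m) + BED_O abO gamma (d m + e).
Proof.
  unfold total_BED_O; simpl.
  rewrite (sum_upto_ext _ (fun k => BED_O abO gamma (d k)) m)
    by (intros k Hk; rewrite raise_dose_other by lia; reflexivity).
  rewrite raise_dose_at. ring.
Qed.

Lemma objective_raise_last (alphaT betaT X0 e : R) (F : R -> R) (d : nat -> R) (m : nat) :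
  objective alphaT betaT X0 F (S m) (raise_dose d m e) =
  objective alphaT betaT X0 F (S m) d
  - BED_T alphaT betaT (d m + e) + BED_T alphaT betaT (d m).
Proof.
  unfold objective. replace (S m - 1)%nat with m by lia.
  rewrite (Yplus_last _ _ _ _ d) by (intros k Hk; apply raise_dose_other; lia).
  rewrite raise_dose_at. reflexivity.
Qed.

Theorem lemma1 (alphaT betaT abO gamma c X0 : R) (phi F : R -> R) (N : nat)
  (HaT : 0 < alphaT) (HbT : 0 < betaT) (HabO : 0 < abO)
  (Hg0 : 0 < gamma) (Hg1 : gamma < 1) (Hc : 0 < c) (HX0 : 0 < X0)
  (Hphic : phi_continuous_pos phi) (Hphim : phi_nonincreasing_pos phi)
  (HF : is_flow_map alphaT phi F)
  (HN : (1 <= N)%nat)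
  (Hpos : forall x, 0 < x -> 0 < phi x) :
  forall d : nat -> R, optimal alphaT betaT abO gamma c X0 F N d ->
    total_BED_O abO gamma N d = c.
Proof.
  intros d [[Hnn Htot] Hopt].
  destruct N as [|m]; [lia|].
  destruct (Rle_lt_or_eq_dec _ _ Htot) as [Hslack|Htight]; [exfalso|exact Htight].
  assert (Hdm : 0 <= d m) by (apply Hnn; lia).
  destruct (BED_O_right_continuous abO gamma (d m) (c - total_BED_O abO gamma (S m) d))
    as [e [He Hsmall]]; [assumption | assumption | assumption | lra |].
  assert (Hfeas : feasible abO gamma c (S m) (raise_dose d m e)).
  { split.
    - intros k Hk. destruct (Nat.eq_dec k m) as [->|Hkm].
      + rewrite raise_dose_at. lra.
      + rewrite raise_dose_other by exact Hkm. apply Hnn; lia.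
    - rewrite total_BED_O_raise_last. lra. }
  specialize (Hopt _ Hfeas). rewrite objective_raise_last in Hopt.
  assert (Hdecr := BED_T_increasing alphaT betaT (d m) (d m + e) HaT HbT Hdm).
  lra.
Qed.
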